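(* Let $Z\in\mathfrak m$ and let $p,q$ be power series with only even-order terms such that $p(\mathrm{ad}_{JZ})$ and $q(\mathrm{ad}_Z)$ converge as operators on $\mathfrak m$. Then $p(\mathrm{ad}_{JZ})$ and $q(\mathrm{ad}_Z)$ commute as endomorphisms of $\mathfrak m$.
   Context: $\mathfrak g$ is a complex simple Lie algebra with a decomposition $\mathfrak g=\mathfrak k\oplus\mathfrak m$ into the $\pm1$-eigenspaces of an involutive automorphism, arising from an irreducible Hermitian symmetric space: there is $\Upsilon$ in the center of $\mathfrak k$ such that $\mathrm{ad}_\Upsilon$ has eigenvalues $\pm i$ on $\mathfrak m$, with eigenspaces $\mathfrak m^\pm$ (so $[\mathfrak k,\mathfrak m^\pm]\subseteq\mathfrak m^\pm$, $[\mathfrak m^\pm,\mathfrak m^\pm]=0$, $[\mathfrak m,\mathfrak m]\subseteq\mathfrak k$). $J=\mathrm{ad}_\Upsilon|_{\mathfrak m}$. *)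

From HB Require Import structures.
From mathcomp Require Import all_boot all_order all_algebra.
From mathcomp Require Import complex.
From mathcomp Require Import all_classical all_reals topology normedtype sequences.
Import Order.TTheory GRing.Theory Num.Theory numFieldTopology.Exports numFieldNormedType.Exports.
Local Open Scope ring_scope.

Set Implicit Arguments.
Unset Strict Implicit.
Unset Printing Implicit Defensive.

Definition CC (R : realType) : numClosedFieldType := R[i].

(* A finite-dimensional complex Lie algebra g is modelled (after choosing a
   basis) on the row vectors 'rV[CC R]_n with a bracket br. *)
Definition is_lie_bracket (R : realType) (n : nat)
    (br : 'rV[CC R]_n -> 'rV[CC R]_n -> 'rV[CC R]_n) : Prop :=
  [/\ forall a x y z, br (a *: x + y) z = a *: br x z + br y z,
      forall a x y z, br x (a *: y + z) = a *: br x y + br x z,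
      forall x, br x x = 0 &
      forall x y z, br x (br y z) + br y (br z x) + br z (br x y) = 0].

Definition lie_ideal (R : realType) (n : nat)
    (br : 'rV[CC R]_n -> 'rV[CC R]_n -> 'rV[CC R]_n) (U : 'M[CC R]_n) : Prop :=
  forall x y, (y <= U)%MS -> (br x y <= U)%MS.

Definition simple_lie_algebra (R : realType) (n : nat)
    (br : 'rV[CC R]_n -> 'rV[CC R]_n -> 'rV[CC R]_n) : Prop :=
  [/\ is_lie_bracket br,
      exists x y, br x y != 0 &
      forall U : 'M[CC R]_n, lie_ideal br U -> (\rank U == 0)%N || row_full U].

Definition involutive_automorphism (R : realType) (n : nat)
    (br : 'rV[CC R]_n -> 'rV[CC R]_n -> 'rV[CC R]_n)
    (theta : 'rV[CC R]_n -> 'rV[CC R]_n) : Prop :=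
  [/\ forall a x y, theta (a *: x + y) = a *: theta x + theta y,
      forall x y, theta (br x y) = br (theta x) (theta y) &
      forall x, theta (theta x) = x].

Definition in_k (R : realType) (n : nat) (theta : 'rV[CC R]_n -> 'rV[CC R]_n)
  (x : 'rV[CC R]_n) : Prop := theta x = x.
Definition in_m (R : realType) (n : nat) (theta : 'rV[CC R]_n -> 'rV[CC R]_n)
  (x : 'rV[CC R]_n) : Prop := theta x = - x.

Definition hermitian_element (R : realType) (n : nat)
    (br : 'rV[CC R]_n -> 'rV[CC R]_n -> 'rV[CC R]_n)
    (theta : 'rV[CC R]_n -> 'rV[CC R]_n) (Ups : 'rV[CC R]_n) : Prop :=
  [/\ in_k theta Ups,
      forall x, in_k theta x -> br Ups x = 0,
      forall v, in_m theta v -> exists vp vm,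
          [/\ v = vp + vm, in_m theta vp, in_m theta vm,
              br Ups vp = 'i *: vp & br Ups vm = - 'i *: vm],
      exists v, [/\ in_m theta v, v != 0 & br Ups v = 'i *: v] &
      exists v, [/\ in_m theta v, v != 0 & br Ups v = - 'i *: v]].

Definition even_power_series (R : realType) (a : nat -> CC R) : Prop :=
  forall k, odd k -> a k = 0.

Definition pser_partial (R : realType) (n : nat) (a : nat -> CC R)
    (f : 'rV[CC R]_n -> 'rV[CC R]_n) (N : nat) (v : 'rV[CC R]_n) : 'rV[CC R]_n :=
  \sum_(k < N) a k *: iter k f v.

(* a(f) converges as an operator on m (pointwise on m; equivalent to operator
   convergence since m is finite-dimensional). *)
Definition pser_converges_on_m (R : realType) (n : nat)
    (theta : 'rV[CC R]_n -> 'rV[CC R]_n) (a : nat -> CC R)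
    (f : 'rV[CC R]_n -> 'rV[CC R]_n) : Prop :=
  forall v, in_m theta v -> cvgn (pser_partial a f ^~ v).

Definition pser_op (R : realType) (n : nat) (a : nat -> CC R)
    (f : 'rV[CC R]_n -> 'rV[CC R]_n) (v : 'rV[CC R]_n) : 'rV[CC R]_n :=
  limn (pser_partial a f ^~ v).

From HB Require Import structures.
From mathcomp Require Import all_boot all_order all_algebra.
From mathcomp Require Import complex.
From mathcomp Require Import all_classical all_reals topology normedtype sequences.
Import Order.TTheory GRing.Theory Num.Theory numFieldTopology.Exports numFieldNormedType.Exports.
Local Open Scope classical_set_scope.
Local Open Scope ring_scope.

Set Implicit Arguments.
Unset Strict Implicit.
Unset Printing Implicit Defensive.

(* Write Z = X + Y with X in m^+ and Y in m^-, so that ad_Z = ad_X + ad_Y and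
   ad_JZ = i (ad_X - ad_Y).  Since m^+ and m^- are abelian and stable under
   [k, -], the squares (ad_X + ad_Y)^2 and (ad_X - ad_Y)^2 commute on m: after
   expansion the only discrepancy left is ad_Y [ad_Y X, ad_Y u] for u in m^+
   (and symmetrically), which vanishes because ad_Y^3 kills m^+.  Even power
   series in ad_JZ and ad_Z are power series in these squares, which preserve m,
   so their partial sums commute on m.  The limits can then be exchanged, as
   linear maps of a finite-dimensional space are continuous and m is closed. *)

Section LieBracket.

Variables (K : numFieldType) (V : lmodType K) (br : V -> V -> V).
Hypothesis br_bilin : bilinear_for *:%R *:%R br.
Hypothesis br_alt : forall x, br x x = 0.
Hypothesis br_jacobi :
  forall x y z, br x (br y z) + br y (br z x) + br z (br x y) = 0.

HB.instance Definition _ := bilinear_isBilinear.Build K V V V *:%R *:%R br br_bilin.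

Lemma br_antisym x y : br x y = - br y x.
Proof.
apply/eqP; rewrite -addr_eq0; apply/eqP.
by have := br_alt (x + y); rewrite linearDl !linearDr /= !br_alt add0r addr0.
Qed.

Lemma br_leibniz x u w : br x (br u w) = br (br x u) w + br u (br x w).
Proof.
have := br_jacobi x u w; rewrite (br_antisym w x) linearNr /= (br_antisym w).
by move/eqP; rewrite -addrA -opprD subr_eq0 addrC => /eqP.
Qed.

Section SymmetricPair.

Variables (theta : V -> V) (Ups : V).
Hypothesis theta_br : forall x y, theta (br x y) = br (theta x) (theta y).
Hypothesis Ups_central : forall x, theta x = x -> br Ups x = 0.

Definition m_eigen (s : K) u := theta u = - u /\ br Ups u = s *: u.

Lemma br_m_m x u : theta x = - x -> theta u = - u -> theta (br x u) = br x u.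
Proof. by move=> thx thu; rewrite theta_br thx thu linearNl linearNr opprK. Qed.

Lemma br_m_k x w : theta x = - x -> theta w = w -> theta (br x w) = - br x w.
Proof. by move=> thx thw; rewrite theta_br thx thw linearNl. Qed.

Lemma br_m_eigen_eq0 s x u : s != 0 -> m_eigen s x -> m_eigen s u -> br x u = 0.
Proof.
move=> s_neq0 [thx Upsx] [thu Upsu].
have := Ups_central (br_m_m thx thu).
rewrite br_leibniz Upsx Upsu linearZl_LR linearZr_LR -scalerDl => /eqP.
by rewrite scaler_eq0 -mulr2n mulrn_eq0 (negbTE s_neq0) => /eqP.
Qed.

Lemma m_eigen_br_k s x w : m_eigen s x -> theta w = w -> m_eigen s (br x w).
Proof.
move=> [thx Upsx] thw; split; first exact: br_m_k.
by rewrite br_leibniz Upsx Ups_central // linear0r addr0 linearZl_LR.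
Qed.

Lemma ad_cube_m_eigen_eq0 s x z :
  s != 0 -> m_eigen s x -> m_eigen (- s) z -> br x (br x (br x z)) = 0.
Proof.
move=> s_neq0 Ex [thz _]; apply: (br_m_eigen_eq0 s_neq0 Ex).
exact/(m_eigen_br_k Ex)/br_m_m/thz/Ex.1.
Qed.

Lemma ad_br_ad_m_eigen_eq0 s x y v : s != 0 ->
  m_eigen s x -> m_eigen (- s) y -> m_eigen (- s) v ->
  br x (br (br x y) (br x v)) = 0.
Proof.
move=> s_neq0 Ex Ey Ev.
have yv0 : br y v = 0 by apply: (br_m_eigen_eq0 _ Ey Ev); rewrite oppr_eq0.
have xxxy0 := ad_cube_m_eigen_eq0 s_neq0 Ex Ey.
have xxxv0 := ad_cube_m_eigen_eq0 s_neq0 Ex Ev.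
set T := br (br x (br x y)) (br x v) + br (br x y) (br x (br x v)).
(* [ad x]^3 kills m^-s, so the Leibniz expansion of [(ad x)^3 [y, v] = 0] is [3 T = 0]. *)
have : br x (br x (br x (br y v))) = T *+ 3.
  rewrite (br_leibniz x y v) !linearDr /= (br_leibniz x (br x y) v).
  rewrite (br_leibniz x y (br x v)) !linearDr /= (br_leibniz x (br x (br x y)) v).
  rewrite (br_leibniz x (br x y) (br x v)) (br_leibniz x y (br x (br x v))).
  rewrite xxxy0 xxxv0 linear0l linear0r add0r addr0 -/T.
  by rewrite (addrC T) addrACA -/T mulrS mulr2n.
rewrite yv0 !linear0r -scaler_nat => /esym/eqP.
by rewrite scaler_eq0 pnatr_eq0 /= br_leibniz => /eqP.
Qed.

Lemma ad_sq_sum_diff_comm s x y u : s != 0 ->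
  m_eigen s x -> m_eigen (- s) y -> m_eigen s u ->
  br (x + y) (br (x + y) (br (x - y) (br (x - y) u)))
  = br (x - y) (br (x - y) (br (x + y) (br (x + y) u))).
Proof.
move=> s_neq0 Ex Ey Eu.
have ms_neq0 : - s != 0 by rewrite oppr_eq0.
have Ex' : m_eigen (- - s) x by rewrite opprK.
have Eu' : m_eigen (- - s) u by rewrite opprK.
have xu0 : br x u = 0 := br_m_eigen_eq0 s_neq0 Ex Eu.
have xxyu0 : br x (br x (br y u)) = 0.
  exact/(br_m_eigen_eq0 s_neq0 Ex)/m_eigen_br_k/br_m_m/Eu.1/Ey.1.
have yyyu0 := ad_cube_m_eigen_eq0 ms_neq0 Ey Eu'.
have yyxyu : br y (br y (br x (br y u))) = br y (br x (br y (br y u))).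
  have ad_yx w : br (br y x) w = br y (br x w) - br x (br y w).
    by rewrite br_leibniz addrK.
  have := ad_br_ad_m_eigen_eq0 ms_neq0 Ey Ex' Eu'.
  rewrite ad_yx linearBr.
  by move/eqP; rewrite subr_eq0 => /eqP.
(* After expansion the two sides differ by twice the difference in [yyxyu]. *)
rewrite !(linearDl, linearDr, linearNl, linearNr) /= xu0 xxyu0 yyyu0 yyxyu !linear0r.
by rewrite !(sub0r, add0r, addr0, opprK, oppr0) subrr addNr.
Qed.

Lemma br_k_m w x : theta w = w -> theta x = - x -> theta (br w x) = - br w x.
Proof. by move=> thw thx; rewrite theta_br thw thx linearNr. Qed.

Lemma br_br_m x u :
  theta x = - x -> theta u = - u -> theta (br x (br x u)) = - br x (br x u).
Proof. by move=> thx thu; apply/br_m_k/br_m_m. Qed.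

Lemma ad_sq_comm s Z u : s != 0 ->
  (forall v, theta v = - v -> exists vp vm, [/\ v = vp + vm,
     theta vp = - vp, theta vm = - vm, br Ups vp = s *: vp & br Ups vm = - s *: vm]) ->
  theta Z = - Z -> theta u = - u ->
  br (br Ups Z) (br (br Ups Z) (br Z (br Z u)))
  = br Z (br Z (br (br Ups Z) (br (br Ups Z) u))).
Proof.
move=> s_neq0 m_decomp thZ thu.
have [X [Y [-> thX thY UpsX UpsY]]] := m_decomp Z thZ.
have [up [um [-> thup thum Upsup Upsum]]] := m_decomp u thu.
have UpsZ : br Ups (X + Y) = s *: (X - Y).
  by rewrite linearDr /= UpsX UpsY scaleNr scalerBr.
have ad_UpsZ w : br (br Ups (X + Y)) w = s *: br (X - Y) w.
  by rewrite UpsZ linearZl_LR.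
rewrite !ad_UpsZ !linearZr_LR /= !scalerA; congr (_ *: _).
rewrite !linearDr /=; congr (_ + _).
  by rewrite (ad_sq_sum_diff_comm s_neq0).
have EX : m_eigen (- - s) X by rewrite opprK.
have ad_YX2 w : br (Y - X) (br (Y - X) w) = br (X - Y) (br (X - Y) w).
  by rewrite -opprB !linearNl linearNr opprK.
have ms_neq0 : - s != 0 by rewrite oppr_eq0.
have := ad_sq_sum_diff_comm ms_neq0 (conj thY UpsY) EX (conj thum Upsum).
by rewrite addrC !ad_YX2.
Qed.

End SymmetricPair.
End LieBracket.

Lemma iter_even (T : Type) (f : T -> T) k x :
  ~~ odd k -> iter k f x = iter k./2 (fun y => f (f y)) x.
Proof. by move=> /negbTE k_even; rewrite -[k in LHS]odd_double_half k_even -muln2 iterM. Qed.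

Lemma iter_comm_in (T : Type) (S : T -> Prop) (f g : T -> T) :
  (forall u, S u -> S (f u)) -> (forall u, S u -> S (g u)) ->
  (forall u, S u -> f (g u) = g (f u)) ->
  forall j k u, S u -> iter j f (iter k g u) = iter k g (iter j f u).
Proof.
move=> Sf Sg fg.
have Sg_iter k u : S u -> S (iter k g u) by elim: k => //= k IHk /IHk/Sg.
have f_iter k u : S u -> f (iter k g u) = iter k g (f u).
  by elim: k => //= k IHk Su; rewrite fg ?IHk //; apply: Sg_iter.
elim=> //= j IHj k u Su; rewrite IHj // f_iter //.
by elim: j {IHj} => //= j IHj; apply: Sf.
Qed.

Lemma iter_even_in (T : Type) (S : T -> Prop) (f : T -> T) k u :
  (forall w, S w -> S (f (f w))) -> ~~ odd k -> S u -> S (iter k f u).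
Proof. by move=> Sf2 k_even; rewrite iter_even //; elim: k./2 => //= j IHj /IHj/Sf2. Qed.

Section IterLinear.
Variables (K : pzRingType) (V : lmodType K) (f : {linear V -> V}).

Lemma linear_iter k : linear (iter k f).
Proof. by elim: k => [|k IHk] a u v //=; rewrite IHk linearP. Qed.

HB.instance Definition _ k := GRing.isLinear.Build K V V *:%R (iter k f) (linear_iter k).

End IterLinear.

Section PserPartialLinear.
Variables (R : realType) (n : nat) (a : nat -> CC R).
Variable f : {linear 'rV[CC R]_n -> 'rV[CC R]_n}.

Lemma linear_pser_partial N : linear (pser_partial a f N).
Proof.
move=> c u v; rewrite /pser_partial scaler_sumr -big_split /=.
by apply: eq_bigr => k _; rewrite linearP scalerDr !scalerA mulrC.
Qed.

HB.instance Definition _ N :=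
  GRing.isLinear.Build _ _ _ *:%R (pser_partial a f N) (linear_pser_partial N).

End PserPartialLinear.

Section LinearContinuous.
Variables (K : numFieldType) (n : nat) (W : normedModType K) (f : 'rV[K]_n -> W).
Hypothesis f_lin : linear f.

HB.instance Definition _ := GRing.isLinear.Build K _ _ *:%R f f_lin.

Lemma linear_continuous : continuous f.
Proof.
have -> : f = fun w => \sum_(i < n) w 0 i *: f (delta_mx 0 i).
  by apply/funext => w; rewrite {1}(row_sum_delta w) linear_sum; under eq_bigr do rewrite linearZ.
apply: continuous_big => [|i _]; first exact: add_continuous.
by move=> w; apply: continuousZl; apply: coord_continuous.
Qed.

End LinearContinuous.

Arguments linear_continuous {K n W f}.

Section CommutingLimits.
Variables (K : numFieldType) (n : nat).
Local Notation V := 'rV[K]_n.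
Variables (theta : V -> V) (P Q : nat -> V -> V).
Hypotheses (theta_lin : linear theta) (theta_inv : involutive theta).
Hypotheses (P_lin : forall M, linear (P M)) (Q_lin : forall N, linear (Q N)).
Hypothesis Q_m : forall N w, theta w = - w -> theta (Q N w) = - Q N w.
Hypothesis PQ_comm : forall M N w, theta w = - w -> P M (Q N w) = Q N (P M w).
Hypothesis P_cvg : forall w, theta w = - w -> cvgn (P ^~ w).
Hypothesis Q_cvg : forall w, theta w = - w -> cvgn (Q ^~ w).

HB.instance Definition _ := GRing.isLinear.Build K V V *:%R theta theta_lin.
HB.instance Definition _ M := GRing.isLinear.Build K V V *:%R (P M) (P_lin M).

Lemma limn_m (u : nat -> V) :
  (forall N, theta (u N) = - u N) -> cvgn u -> theta (limn u) = - limn u.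
Proof.
move=> u_m u_cvg.
apply: (cvg_unique (@norm_hausdorff _ _) (F := (theta \o u) @ \oo)) => /=.
  exact: (continuous_cvg _ (linear_continuous theta_lin _) u_cvg).
by under eq_cvg do rewrite /= u_m; apply: cvgN.
Qed.

(* The projection onto m along the fixed space of [theta]: precomposing the limit
   operator with it gives a map that is linear, hence continuous, on the whole space. *)
Let pi w := 2^-1 *: (w - theta w).

Lemma pi_m w : theta (pi w) = - pi w.
Proof. by rewrite linearZ linearB /= theta_inv -scalerN opprB. Qed.

Lemma pi_id w : theta w = - w -> pi w = w.
Proof.
move=> w_m; rewrite /pi w_m opprK -mulr2n -[w *+ 2]scaler_nat scalerA mulVf ?scale1r //.
by rewrite pnatr_eq0.
Qed.

Lemma linear_pi : linear pi.
Proof.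
move=> a u v; rewrite /pi linearP /= scalerA mulrC -scalerA -scalerDr.
by congr (_ *: _); rewrite scalerBr opprD addrACA.
Qed.

Let G w := limn (P ^~ w).

Lemma linear_limn_pi : linear (fun w => G (pi w)).
Proof.
move=> a u v; rewrite /= linear_pi; apply: (cvg_lim (@norm_hausdorff _ _)).
under eq_cvg do rewrite linearP.
by apply: cvgD; [apply: cvgZr|]; apply: P_cvg; apply: pi_m.
Qed.

Lemma limn_comm v : theta v = - v -> G (limn (Q ^~ v)) = limn (Q ^~ (G v)).
Proof.
move=> v_m.
have QG N : G (Q N v) = Q N (G v).
  apply: (cvg_lim (@norm_hausdorff _ _)); under eq_cvg do rewrite PQ_comm //.
  exact: (continuous_cvg _ (linear_continuous (Q_lin N) _) (P_cvg v_m)).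
have Qv_m : theta (limn (Q ^~ v)) = - limn (Q ^~ v).
  by apply: limn_m => [N|]; [apply: Q_m | apply: Q_cvg].
suff QGv : (fun N => Q N (G v)) @ \oo --> G (limn (Q ^~ v)).
  exact/esym/(cvg_lim (@norm_hausdorff _ _)).
rewrite -[X in _ --> G X]pi_id //.
under eq_cvg do rewrite -QG -[Q _ v]pi_id ?Q_m //.
exact: (continuous_cvg _ (linear_continuous linear_limn_pi _) (Q_cvg v_m)).
Qed.

End CommutingLimits.

Section PowerSeries.
Variables (R : realType) (n : nat).
Local Notation V := 'rV[CC R]_n.
Variable theta : V -> V.
Hypothesis theta_lin : linear theta.

HB.instance Definition _ := GRing.isLinear.Build _ _ _ *:%R theta theta_lin.

Lemma pser_partial_m (h : V -> V) (a : nat -> CC R) N u :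
  even_power_series a -> (forall w, in_m theta w -> in_m theta (h (h w))) ->
  in_m theta u -> in_m theta (pser_partial a h N u).
Proof.
move=> a_even h2_m u_m; rewrite /in_m /pser_partial linear_sum -sumrN.
apply: eq_bigr => k _; case k_odd : (odd k).
  by rewrite a_even // !scale0r linear0 oppr0.
by rewrite linearZ /= (iter_even_in (S := in_m theta)) ?k_odd // scalerN.
Qed.

Variables (f g : V -> V) (p q : nat -> CC R).
Hypotheses (f_lin : linear f) (g_lin : linear g).
Hypotheses (p_even : even_power_series p) (q_even : even_power_series q).
Hypothesis f2_m : forall u, in_m theta u -> in_m theta (f (f u)).
Hypothesis g2_m : forall u, in_m theta u -> in_m theta (g (g u)).
Hypothesis fg2_comm : forall u, in_m theta u -> f (f (g (g u))) = g (g (f (f u))).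

HB.instance Definition _ := GRing.isLinear.Build _ _ _ *:%R f f_lin.
HB.instance Definition _ := GRing.isLinear.Build _ _ _ *:%R g g_lin.

Lemma pser_partial_comm M N u : in_m theta u ->
  pser_partial p f M (pser_partial q g N u) = pser_partial q g N (pser_partial p f M u).
Proof.
move=> u_m.
rewrite [pser_partial q g N u]/pser_partial [pser_partial p f M u]/pser_partial.
rewrite !linear_sum /= exchange_big /=; apply: eq_bigr => j _.
rewrite linearZ /= scaler_sumr; apply: eq_bigr => k _.
rewrite !linearZ /= !scalerA mulrC.
case j_odd : (odd j); first by rewrite p_even // !(mulr0, mul0r, scale0r).
case k_odd : (odd k); first by rewrite q_even // !(mulr0, mul0r, scale0r).
rewrite !(iter_even f _ (negbT j_odd)) !(iter_even g _ (negbT k_odd)).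
by congr (_ *: _); apply: (iter_comm_in (S := in_m theta)).
Qed.

Hypothesis theta_inv : involutive theta.
Hypotheses (p_cvg : pser_converges_on_m theta p f) (q_cvg : pser_converges_on_m theta q g).

Lemma pser_op_comm v : in_m theta v ->
  pser_op p f (pser_op q g v) = pser_op q g (pser_op p f v).
Proof.
apply: (limn_comm theta_lin theta_inv) => [M|N|N w w_m|M N w|w|w].
- exact: linearP.
- exact: linearP.
- exact: pser_partial_m.
- exact: pser_partial_comm.
- exact: p_cvg.
- exact: q_cvg.
Qed.

End PowerSeries.

Theorem corollary4p3 (R : realType) (n : nat)
    (br : 'rV[CC R]_n -> 'rV[CC R]_n -> 'rV[CC R]_n)
    (theta : 'rV[CC R]_n -> 'rV[CC R]_n) (Ups Z : 'rV[CC R]_n)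
    (p q : nat -> CC R) :
  simple_lie_algebra br ->
  involutive_automorphism br theta ->
  hermitian_element br theta Ups ->
  in_m theta Z ->
  even_power_series p -> even_power_series q ->
  pser_converges_on_m theta p (br (br Ups Z)) ->
  pser_converges_on_m theta q (br Z) ->
  forall v, in_m theta v ->
    pser_op p (br (br Ups Z)) (pser_op q (br Z) v)
    = pser_op q (br Z) (pser_op p (br (br Ups Z)) v).
Proof.
move=> [[br_linl br_linr br_alt br_jacobi] _ _] [theta_lin theta_br theta_inv].
move=> [Ups_k Ups_central m_decomp _ _] Z_m p_even q_even p_cvg q_cvg.
have br_bilin : bilinear_for *:%R *:%R br.
  by split=> [z a x y | x a y z]; [apply: br_linl | apply: br_linr].
have br_lin x : linear (br x) := br_bilin.2 x.
have UpsZ_m : in_m theta (br Ups Z) := br_k_m br_bilin theta_br Ups_k Z_m.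
apply: (pser_op_comm theta_lin (br_lin _) (br_lin _)) => // [u u_m|u u_m|u u_m].
- exact: (br_br_m br_bilin theta_br).
- exact: (br_br_m br_bilin theta_br).
- exact: (ad_sq_comm br_bilin br_alt br_jacobi theta_br Ups_central (neq0Ci _) m_decomp).
Qed.
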